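(* Let $(E,\tau)$ be a locally convex space with a fundamental sequence $(B_n)_n$ of bounded sets. Then there exists a finest locally convex topology $\xi$ on $E$ having the same bounded sets as $\tau$, and $(E,\xi)$ has a $\mathfrak{G}$-base and has the strong Pytkeev property. Moreover, if $(E,\tau)$ is bornological, then $\tau=\xi$.
   Context: A fundamental sequence of bounded sets is a sequence of bounded sets such that every bounded set lies in one of them. An lcs is bornological if every absolutely convex bornivorous set is a neighborhood of zero. A $\mathfrak{G}$-base is a base $\{U_\alpha:\alpha\in\mathbb{N}^\mathbb{N}\}$ of neighborhoods of zero with $U_\beta\subseteq U_\alpha$ whenever $\alpha\le\beta$ coordinatewise. A space has the strong Pytkeev property if for each point $x$ there is a countable family $\mathcal{D}$ of subsets such that for each neighborhood $U$ of $x$ and each $A$ with $x\in\overline{A}\setminus A$ there is $D\in\mathcal{D}$ with $D\subseteq U$ and $D\cap A$ infinite. *)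

From Stdlib Require Import Reals List.
Open Scope R_scope.

Record VectorSpace := {
  vcar :> Type;
  vzero : vcar;
  vadd : vcar -> vcar -> vcar;
  vopp : vcar -> vcar;
  vscal : R -> vcar -> vcar;
  vadd_assoc : forall x y z, vadd x (vadd y z) = vadd (vadd x y) z;
  vadd_comm : forall x y, vadd x y = vadd y x;
  vadd_0 : forall x, vadd x vzero = x;
  vadd_opp : forall x, vadd x (vopp x) = vzero;
  vscal_assoc : forall a b x, vscal a (vscal b x) = vscal (a * b) x;
  vscal_1 : forall x, vscal 1 x = x;
  vscal_distr_l : forall a x y, vscal a (vadd x y) = vadd (vscal a x) (vscal a y);
  vscal_distr_r : forall a b x, vscal (a + b) x = vadd (vscal a x) (vscal b x)
}.

Arguments vzero {_}.
Arguments vadd {_} _ _.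
Arguments vopp {_} _.
Arguments vscal {_} _ _.

Definition subset {X : Type} (A B : X -> Prop) : Prop := forall x, A x -> B x.

Definition is_topology {X : Type} (T : (X -> Prop) -> Prop) : Prop :=
  T (fun _ => True) /\
  (forall U V, T U -> T V -> T (fun x => U x /\ V x)) /\
  (forall F : (X -> Prop) -> Prop, (forall U, F U -> T U) ->
     T (fun x => exists U, F U /\ U x)).

Definition nbhd {X : Type} (T : (X -> Prop) -> Prop) (x : X) (N : X -> Prop) : Prop :=
  exists U, T U /\ U x /\ subset U N.

Definition closure {X : Type} (T : (X -> Prop) -> Prop) (A : X -> Prop) (x : X) : Prop :=
  forall N, nbhd T x N -> exists y, N y /\ A y.

Definition finite_set {X : Type} (A : X -> Prop) : Prop :=
  exists l : list X, forall x, A x -> In x l.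

Section LCS.
Context {E : VectorSpace}.

Definition add_continuous (T : (E -> Prop) -> Prop) : Prop :=
  forall x y W, nbhd T (vadd x y) W ->
    exists U V, nbhd T x U /\ nbhd T y V /\
      forall u v, U u -> V v -> W (vadd u v).

Definition scal_continuous (T : (E -> Prop) -> Prop) : Prop :=
  forall a x W, nbhd T (vscal a x) W ->
    exists d U, 0 < d /\ nbhd T x U /\
      forall b u, Rabs (b - a) < d -> U u -> W (vscal b u).

Definition convex (C : E -> Prop) : Prop :=
  forall x y t, C x -> C y -> 0 <= t <= 1 ->
    C (vadd (vscal t x) (vscal (1 - t) y)).

Definition absolutely_convex (C : E -> Prop) : Prop :=
  forall x y a b, C x -> C y -> Rabs a + Rabs b <= 1 ->
    C (vadd (vscal a x) (vscal b y)).

Definition hausdorff (T : (E -> Prop) -> Prop) : Prop :=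
  forall x y, x <> y -> exists U V, nbhd T x U /\ nbhd T y V /\
    forall z, ~ (U z /\ V z).

Definition lc_topology (T : (E -> Prop) -> Prop) : Prop :=
  is_topology T /\ add_continuous T /\ scal_continuous T /\ hausdorff T /\
  (forall N, nbhd T vzero N -> exists C, nbhd T vzero C /\ convex C /\ subset C N).

Definition absorbs (U B : E -> Prop) : Prop :=
  exists t, 0 < t /\ forall s, t <= Rabs s ->
    forall b, B b -> exists u, U u /\ b = vscal s u.

Definition vbounded (T : (E -> Prop) -> Prop) (B : E -> Prop) : Prop :=
  forall U, nbhd T vzero U -> absorbs U B.

Definition bornivorous (T : (E -> Prop) -> Prop) (U : E -> Prop) : Prop :=
  forall B, vbounded T B -> absorbs U B.

Definition bornological (T : (E -> Prop) -> Prop) : Prop :=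
  forall U, absolutely_convex U -> bornivorous T U -> nbhd T vzero U.

Definition fundamental_bounded_seq (T : (E -> Prop) -> Prop) (B : nat -> E -> Prop) : Prop :=
  (forall n, vbounded T (B n)) /\
  (forall A, vbounded T A -> exists n, subset A (B n)).

Definition has_G_base (T : (E -> Prop) -> Prop) : Prop :=
  exists U : (nat -> nat) -> E -> Prop,
    (forall al, nbhd T vzero (U al)) /\
    (forall N, nbhd T vzero N -> exists al, subset (U al) N) /\
    (forall al be, (forall i, (al i <= be i)%nat) -> subset (U be) (U al)).

Definition strong_Pytkeev (T : (E -> Prop) -> Prop) : Prop :=
  forall x, exists D : nat -> E -> Prop,
    forall U A, nbhd T x U -> closure T A x -> ~ A x ->
      exists n, subset (D n) U /\ ~ finite_set (fun y => D n y /\ A y).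

End LCS.

From Stdlib Require Import Reals Lra Lia List Classical ClassicalEpsilon FunctionalExtensionality PropExtensionality Cantor.
Open Scope R_scope.

(* Neighbourhoods of zero for [born tau] are the absolutely convex bornivorous
   sets.  Every locally convex topology with the same bounded sets has a base of
   such sets at zero, so [born tau] is the finest one, and it is [tau] itself
   when [tau] is bornological.  As (B_n) is fundamental, the absolutely convex
   hulls U_α of ⋃_n B_n/(α(n)+1) form a 𝔊-base.
   For the strong Pytkeev property at x use the sets x + D_l, where l is a
   finite sequence and D_l = ⋂ {U_α | α extends l}.  Since U_α is the union of
   the hulls of its first k layers, every point of U_α lies in some D_{α|k}.
   If x ∈ cl A \ A and every D_l below a given neighbourhood met A - x in a
   finite set, one could extend l one entry at a time, taking the new entry so
   large that D_l stays disjoint from A - x (Hausdorffness gives D_[] = {0});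
   the resulting α would give a neighbourhood x + U_α missing A. *)

Arguments vadd_assoc {_}. Arguments vadd_comm {_}. Arguments vadd_0 {_}. Arguments vadd_opp {_}.
Arguments vscal_assoc {_}. Arguments vscal_1 {_}. Arguments vscal_distr_l {_}. Arguments vscal_distr_r {_}.

Section VectorAlgebra.
Context {E : VectorSpace}.

Lemma vadd_0_l (x : E) : vadd vzero x = x.
Proof. rewrite vadd_comm; apply vadd_0. Qed.

Lemma vadd_cancel_opp_r (x y : E) : vadd x (vadd (vopp x) y) = y.
Proof. rewrite vadd_assoc, vadd_opp, vadd_0_l; reflexivity. Qed.

Lemma vadd_cancel_opp_l (x y : E) : vadd (vopp x) (vadd x y) = y.
Proof. rewrite vadd_assoc, (vadd_comm (vopp x) x), vadd_opp, vadd_0_l; reflexivity. Qed.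

Lemma vadd_reg_l (x y z : E) : vadd x y = vadd x z -> y = z.
Proof.
  intro H. rewrite <- (vadd_cancel_opp_l x y), <- (vadd_cancel_opp_l x z), H; reflexivity.
Qed.

Lemma vscal_0_l (x : E) : vscal 0 x = vzero.
Proof.
  apply (vadd_reg_l (vscal 0 x)). rewrite vadd_0, <- vscal_distr_r. f_equal; ring.
Qed.

Lemma vscal_0_r (a : R) : vscal a (@vzero E) = vzero.
Proof. rewrite <- (vscal_0_l vzero), vscal_assoc. f_equal; ring. Qed.

Lemma vscal_Rinv_r (s : R) (x : E) : s <> 0 -> vscal s (vscal (/ s) x) = x.
Proof. intro H. rewrite vscal_assoc, Rinv_r by exact H. apply vscal_1. Qed.

Lemma vscal_reg_l (s : R) (x y : E) : s <> 0 -> vscal s x = vscal s y -> x = y.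
Proof.
  intros H Hxy. rewrite <- (vscal_1 x), <- (vscal_1 y), <- (Rinv_l s H), <- !vscal_assoc, Hxy.
  reflexivity.
Qed.

Lemma vscal_comm (a b : R) (x : E) : vscal a (vscal b x) = vscal b (vscal a x).
Proof. rewrite !vscal_assoc; f_equal; ring. Qed.

Lemma vadd_add_swap (a b c d : E) : vadd (vadd a b) (vadd c d) = vadd (vadd a c) (vadd b d).
Proof.
  rewrite <- !vadd_assoc. f_equal. rewrite !vadd_assoc. f_equal. apply vadd_comm.
Qed.

Lemma vscal_add_sub (a b : R) (x : E) : vscal b x = vadd (vscal a x) (vscal (b - a) x).
Proof. rewrite <- vscal_distr_r. f_equal; ring. Qed.

End VectorAlgebra.

Section TopologicalVectorSpace.
Context {E : VectorSpace}.
Implicit Types T : (E -> Prop) -> Prop.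

Lemma nbhd_mono T x (N N' : E -> Prop) : nbhd T x N -> subset N N' -> nbhd T x N'.
Proof. intros [U [HU [Hx HUN]]] HN. exists U; repeat split; auto. intros y Hy; auto. Qed.

Lemma nbhd_mem T x N : nbhd T x N -> N x.
Proof. intros [U [_ [Hx HUN]]]; auto. Qed.

Lemma nbhd_translate_0 T x N : add_continuous T -> nbhd T x N ->
  nbhd T vzero (fun v => N (vadd x v)).
Proof.
  intros Ha HN. rewrite <- (vadd_0 x) in HN. destruct (Ha _ _ _ HN) as [U [V [HU [HV HUV]]]].
  apply (nbhd_mono _ _ _ _ HV). intros v Hv. apply HUV; auto. exact (nbhd_mem _ _ _ HU).
Qed.

Lemma nbhd_translate_from_0 T x N : add_continuous T -> nbhd T vzero N ->
  nbhd T x (fun z => N (vadd (vopp x) z)).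
Proof.
  intros Ha HN. rewrite <- (vadd_opp x), vadd_comm in HN.
  destruct (Ha _ _ _ HN) as [U [V [HU [HV HUV]]]].
  apply (nbhd_mono _ _ _ _ HV). intros v Hv. apply HUV; auto. exact (nbhd_mem _ _ _ HU).
Qed.

Lemma nbhd_0_scale T c N : scal_continuous T -> nbhd T vzero N ->
  nbhd T vzero (fun v => N (vscal c v)).
Proof.
  intros Hs HN. rewrite <- (vscal_0_r c) in HN. destruct (Hs _ _ _ HN) as [d [U [Hd [HU HUN]]]].
  apply (nbhd_mono _ _ _ _ HU). intros u Hu. apply HUN; auto.
  unfold Rminus; rewrite Rplus_opp_r, Rabs_R0; exact Hd.
Qed.

Lemma absolutely_convex_balanced (V : E -> Prop) v r :
  absolutely_convex V -> V v -> Rabs r <= 1 -> V (vscal r v).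
Proof.
  intros HV Hv Hr. assert (H := HV v v r 0 Hv Hv). rewrite vscal_0_l, vadd_0 in H. apply H.
  rewrite Rabs_R0; lra.
Qed.

Lemma absolutely_convex_0 (V : E -> Prop) v : absolutely_convex V -> V v -> V vzero.
Proof.
  intros HV Hv. rewrite <- (vscal_0_l v). apply absolutely_convex_balanced; auto.
  rewrite Rabs_R0; lra.
Qed.

Lemma absolutely_convex_convex (V : E -> Prop) : absolutely_convex V -> convex V.
Proof. intros H x y t Hx Hy Ht. apply H; auto. rewrite !Rabs_pos_eq by lra. lra. Qed.

Lemma convex_balanced_absolutely_convex (W : E -> Prop) : convex W -> W vzero ->
  (forall v r, W v -> Rabs r <= 1 -> W (vscal r v)) -> absolutely_convex W.
Proof.
  intros Hc H0 Hb x y p q Hx Hy Hpq.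
  destruct (Req_dec p 0) as [Hp|Hp].
  { subst p. rewrite vscal_0_l, vadd_0_l. apply Hb; auto. pose proof (Rabs_pos q).
    rewrite Rabs_R0 in Hpq. lra. }
  destruct (Req_dec q 0) as [Hq|Hq].
  { subst q. rewrite vscal_0_l, vadd_0. apply Hb; auto. pose proof (Rabs_pos p).
    rewrite Rabs_R0 in Hpq. lra. }
  pose proof (Rabs_pos_lt p Hp). pose proof (Rabs_pos_lt q Hq).
  (* p x + q y = t (p/t x) + (1-t) (q/(1-t) y) with t = |p|/(|p|+|q|) *)
  set (s := Rabs p + Rabs q). set (t := Rabs p / s).
  assert (Hs : 0 < s) by (unfold s; lra).
  assert (Ht : 0 < t < 1).
  { unfold t, s; split. apply Rdiv_lt_0_compat; lra.
    apply (Rmult_lt_reg_r (Rabs p + Rabs q)); [lra|]. field_simplify; lra. }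
  assert (Hpt : Rabs (p / t) = s).
  { unfold Rdiv. rewrite Rabs_mult, Rabs_inv, (Rabs_pos_eq t) by lra. unfold t. field. split; lra. }
  assert (Hqt : Rabs (q / (1 - t)) = s).
  { assert (Ht1 : 1 - t = Rabs q / s) by (unfold t, s; field; lra).
    unfold Rdiv. rewrite Rabs_mult, Rabs_inv, (Rabs_pos_eq (1 - t)), Ht1 by lra.
    field. split; lra. }
  replace (vscal p x) with (vscal t (vscal (p / t) x)) by (rewrite vscal_assoc; f_equal; field; lra).
  replace (vscal q y) with (vscal (1 - t) (vscal (q / (1 - t)) y))
    by (rewrite vscal_assoc; f_equal; field; lra).
  apply Hc; [apply Hb; auto | apply Hb; auto | lra]; unfold s in *; lra.
Qed.

Lemma lc_absolutely_convex_nbhd T N : lc_topology T -> nbhd T vzero N ->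
  exists W, absolutely_convex W /\ nbhd T vzero W /\ subset W N.
Proof.
  intros [_ [_ [Hs [_ Hl]]]] HN.
  destruct (Hl _ HN) as [C [HC [Hcv HCN]]].
  assert (HC' : nbhd T (vscal 0 vzero) C) by (rewrite vscal_0_l; exact HC).
  destruct (Hs _ _ _ HC') as [d [U [Hd [HU HUC]]]].
  exists (fun v => forall c, Rabs c <= 1 -> C (vscal c v)). split; [|split].
  - apply convex_balanced_absolutely_convex.
    + intros x y t Hx Hy Ht c Hc. rewrite vscal_distr_l, !(vscal_comm c). apply Hcv; auto.
    + intros c _. rewrite vscal_0_r. exact (nbhd_mem _ _ _ HC).
    + intros v r Hv Hr c Hc. rewrite vscal_assoc. apply Hv. rewrite Rabs_mult.
      pose proof (Rabs_pos c); pose proof (Rabs_pos r). nra.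
  - apply (nbhd_mono _ _ _ _ (nbhd_0_scale _ (2 / d) _ Hs HU)).
    intros v Hv c Hc. replace (vscal c v) with (vscal (c * d / 2) (vscal (2 / d) v)).
    + apply HUC; auto. rewrite Rminus_0_r. unfold Rdiv.
      rewrite !Rabs_mult, Rabs_inv, (Rabs_pos_eq d), (Rabs_pos_eq 2) by lra.
      pose proof (Rabs_pos c). apply (Rmult_lt_reg_r 2); [lra|]. field_simplify; nra.
    + rewrite vscal_assoc. f_equal. field. lra.
  - intros v Hv. rewrite <- (vscal_1 v). apply HCN, Hv. rewrite Rabs_R1; lra.
Qed.

Lemma vbounded_singleton T x : lc_topology T -> vbounded T (fun y => y = x).
Proof.
  intros [_ [_ [Hs _]]] U HU. rewrite <- (vscal_0_l x) in HU.
  destruct (Hs _ _ _ HU) as [d [U' [Hd [HU' HU'U]]]].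
  assert (H2d : 0 < 2 / d) by (apply Rdiv_lt_0_compat; lra).
  exists (2 / d). split; auto.
  intros s Hs2 b ->. assert (Hs0 : s <> 0) by (intros ->; rewrite Rabs_R0 in Hs2; lra).
  exists (vscal (/ s) x). split; [|rewrite vscal_Rinv_r; auto].
  apply HU'U; [|exact (nbhd_mem _ _ _ HU')]. rewrite Rminus_0_r, Rabs_inv.
  apply (Rmult_lt_reg_r (Rabs s)); [lra|]. rewrite Rinv_l by lra.
  apply (Rmult_le_compat_l d) in Hs2; [|lra]. unfold Rdiv in Hs2. field_simplify in Hs2; lra.
Qed.

Lemma absorbs_mono (U U' A A' : E -> Prop) :
  absorbs U A -> subset U U' -> subset A' A -> absorbs U' A'.
Proof.
  intros [t [Ht H]] HU HA. exists t; split; auto. intros s Hs b Hb.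
  destruct (H s Hs b (HA b Hb)) as [u [Hu Hbu]]. exists u; auto.
Qed.

Lemma absolutely_convex_absorbs (V A : E -> Prop) c : absolutely_convex V -> 0 < c ->
  (forall b, A b -> V (vscal c b)) -> absorbs V A.
Proof.
  intros HV Hc H. exists (/ c). split; [apply Rinv_0_lt_compat; auto|].
  intros s Hs b Hb. pose proof (Rinv_0_lt_compat c Hc).
  assert (Hs0 : s <> 0) by (intros ->; rewrite Rabs_R0 in Hs; lra).
  pose proof (Rabs_pos_lt s Hs0).
  exists (vscal (/ s) b). split; [|rewrite vscal_Rinv_r; auto].
  replace (vscal (/ s) b) with (vscal (/ (s * c)) (vscal c b))
    by (rewrite vscal_assoc; f_equal; field; split; lra).
  apply absolutely_convex_balanced; auto. rewrite Rabs_inv, Rabs_mult, (Rabs_pos_eq c) by lra.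
  apply (Rmult_le_reg_r (Rabs s * c)); [nra|]. rewrite Rinv_l by nra.
  apply (Rmult_le_compat_r c) in Hs; [|lra]. rewrite Rinv_l in Hs by lra. lra.
Qed.

End TopologicalVectorSpace.

Section BornTopology.
Context {E : VectorSpace} (tau : (E -> Prop) -> Prop) (Htau : lc_topology tau).

Definition bornivorous_disk (V : E -> Prop) : Prop :=
  absolutely_convex V /\ bornivorous tau V.

Definition born : (E -> Prop) -> Prop :=
  fun O => forall x, O x -> exists V, bornivorous_disk V /\ forall v, V v -> O (vadd x v).

Lemma bornivorous_disk_absorbs_point V x : bornivorous_disk V ->
  exists d, 0 < d /\ forall c, Rabs c < d -> V (vscal c x).
Proof.
  intros [HV HbV]. destruct (HbV _ (vbounded_singleton tau x Htau)) as [t [Ht Habs]].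
  exists (/ t). split; [apply Rinv_0_lt_compat; auto|]. intros c Hc.
  destruct (Req_dec c 0) as [->|Hc0].
  { destruct (Habs t) with x as [u [Hu _]]; auto. rewrite Rabs_pos_eq; lra.
    rewrite vscal_0_l. exact (absolutely_convex_0 _ _ HV Hu). }
  destruct (Habs (/ c)) with x as [u [Hu ->]]; auto.
  - rewrite Rabs_inv. pose proof (Rabs_pos_lt c Hc0).
    apply (Rmult_le_reg_r (Rabs c)); auto. rewrite Rinv_l by lra.
    apply (Rmult_lt_compat_l t) in Hc; auto. rewrite Rinv_r in Hc by lra. lra.
  - rewrite vscal_Rinv_r; auto.
Qed.

Lemma bornivorous_disk_0 V : bornivorous_disk V -> V vzero.
Proof.
  intro HV. destruct (bornivorous_disk_absorbs_point V vzero HV) as [d [Hd H]].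
  rewrite <- (vscal_0_l vzero). apply H. rewrite Rabs_R0; exact Hd.
Qed.

Lemma bornivorous_disk_full : bornivorous_disk (fun _ => True).
Proof.
  split; [intros x y a b _ _ _; auto|]. intros A _. exists 1. split; [lra|].
  intros s Hs b _. exists (vscal (/ s) b). split; auto.
  rewrite vscal_Rinv_r; auto. intros ->; rewrite Rabs_R0 in Hs; lra.
Qed.

Lemma bornivorous_disk_inter V W : bornivorous_disk V -> bornivorous_disk W ->
  bornivorous_disk (fun x => V x /\ W x).
Proof.
  intros [HV HbV] [HW HbW]. split.
  - intros x y a b [Hx1 Hx2] [Hy1 Hy2] H; split; auto.
  - intros A HA. destruct (HbV A HA) as [t1 [Ht1 H1]]. destruct (HbW A HA) as [t2 [Ht2 H2]].
    pose proof (Rmax_l t1 t2). pose proof (Rmax_r t1 t2).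
    exists (Rmax t1 t2). split; [lra|]. intros s Hs b Hb.
    destruct (H1 s) with b as [u1 [Hu1 E1]]; [lra|auto|].
    destruct (H2 s) with b as [u2 [Hu2 E2]]; [lra|auto|].
    assert (u1 = u2) as <-.
    { apply (vscal_reg_l s); [intros ->; rewrite Rabs_R0 in Hs; lra|congruence]. }
    exists u1; auto.
Qed.

Lemma bornivorous_disk_scale V c : bornivorous_disk V -> c <> 0 ->
  bornivorous_disk (fun v => V (vscal c v)).
Proof.
  intros [HV HbV] Hc. pose proof (Rabs_pos_lt c Hc) as Hc_pos. split.
  - intros x y a b Hx Hy H. rewrite vscal_distr_l, !(vscal_comm c). apply HV; auto.
  - intros A HA. destruct (HbV A HA) as [t [Ht H]]. exists (t * Rabs c). split; [nra|].
    intros s Hs b Hb. destruct (H (s / c)) with b as [u [Hu ->]]; auto.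
    + unfold Rdiv; rewrite Rabs_mult, Rabs_inv. apply (Rmult_le_reg_r (Rabs c)); auto.
      rewrite Rmult_assoc, Rinv_l by lra. lra.
    + exists (vscal (/ c) u). split; [rewrite vscal_Rinv_r; auto|].
      rewrite vscal_assoc. reflexivity.
Qed.

Definition halve (V : E -> Prop) : E -> Prop := fun v => V (vscal 2 v).

Lemma bornivorous_disk_halve V : bornivorous_disk V -> bornivorous_disk (halve V).
Proof. intro HV. apply bornivorous_disk_scale; auto; lra. Qed.

Lemma halve_add V v w : absolutely_convex V -> halve V v -> halve V w -> V (vadd v w).
Proof.
  intros HV Hv Hw. assert (H := HV _ _ (/ 2) (/ 2) Hv Hw).
  rewrite !vscal_assoc, Rinv_l, !vscal_1 in H by lra. apply H. rewrite Rabs_pos_eq; lra.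
Qed.

Lemma born_nbhd x N :
  nbhd born x N <-> exists V, bornivorous_disk V /\ forall v, V v -> N (vadd x v).
Proof.
  split.
  - intros [O [HO [Hx HON]]]. destruct (HO x Hx) as [V [HV H]]. exists V; split; auto.
  - intros [V [HV H]]. exists (fun z => exists W, bornivorous_disk W /\ forall w, W w -> N (vadd z w)).
    split; [|split].
    + intros z [W [HW Hz]]. exists (halve W). split; [apply bornivorous_disk_halve; auto|].
      intros w' Hw'. exists (halve W). split; [apply bornivorous_disk_halve; auto|].
      intros w Hw. rewrite <- vadd_assoc. apply Hz, halve_add; auto. apply HW.
    + exists V; auto.
    + intros z [W [HW Hz]]. rewrite <- (vadd_0 z). apply Hz, bornivorous_disk_0; auto.
Qed.

Lemma born_nbhd_translate x V : bornivorous_disk V ->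
  nbhd born x (fun z => exists v, V v /\ z = vadd x v).
Proof. intro HV. apply born_nbhd. exists V; split; auto. intros v Hv; exists v; auto. Qed.

Lemma born_is_topology : is_topology born.
Proof.
  split; [|split].
  - intros x _. exists (fun _ => True). split; auto. apply bornivorous_disk_full.
  - intros U V HU HV x [Hx1 Hx2].
    destruct (HU x Hx1) as [V1 [H1 H1']]. destruct (HV x Hx2) as [V2 [H2 H2']].
    exists (fun v => V1 v /\ V2 v). split; [apply bornivorous_disk_inter; auto|].
    intros v [? ?]; split; auto.
  - intros F HF x [U [HFU HUx]]. destruct (HF U HFU x HUx) as [V [HV H]].
    exists V; split; auto. intros v Hv. exists U; split; auto.
Qed.

Lemma born_add_continuous : add_continuous born.
Proof.
  intros x y W HW. apply born_nbhd in HW. destruct HW as [V [HV H]].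
  pose proof (bornivorous_disk_halve V HV) as HH.
  exists (fun z => exists v, halve V v /\ z = vadd x v), (fun z => exists v, halve V v /\ z = vadd y v).
  split; [apply born_nbhd_translate; auto|split; [apply born_nbhd_translate; auto|]].
  intros u w [v1 [Hv1 ->]] [v2 [Hv2 ->]]. rewrite vadd_add_swap.
  apply H, halve_add; auto. apply HV.
Qed.

Lemma born_scal_continuous : scal_continuous born.
Proof.
  intros a x W HW. apply born_nbhd in HW. destruct HW as [V [HV H]].
  pose proof (bornivorous_disk_halve V HV) as HH.
  destruct (bornivorous_disk_absorbs_point _ x HH) as [d [Hd Hdx]].
  set (k := Rabs a + 1). assert (Hk : 0 < k) by (unfold k; pose proof (Rabs_pos a); lra).
  assert (HHk : bornivorous_disk (fun v => halve V (vscal k v)))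
    by (apply bornivorous_disk_scale; auto; lra).
  exists (Rmin d 1), (fun z => exists v, halve V (vscal k v) /\ z = vadd x v).
  split; [apply Rmin_glb_lt; lra|]. split; [apply born_nbhd_translate; auto|].
  intros b u Hb [v [Hv ->]]. pose proof (Rmin_l d 1). pose proof (Rmin_r d 1).
  (* b (x + v) = a x + ((b - a) x + (b/k) (k v)) *)
  rewrite vscal_distr_l, (vscal_add_sub a b x), <- vadd_assoc.
  apply H, halve_add; [apply HV|apply Hdx; lra|].
  replace (vscal b v) with (vscal (b / k) (vscal k v)) by (rewrite vscal_assoc; f_equal; field; lra).
  apply absolutely_convex_balanced; auto; [apply HH|].
  unfold Rdiv. rewrite Rabs_mult, Rabs_inv, (Rabs_pos_eq k) by lra.
  apply (Rmult_le_reg_r k); auto. rewrite Rmult_assoc, Rinv_l by lra.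
  pose proof (Rabs_triang_inv b a). unfold k; lra.
Qed.

Lemma nbhd_born_of_vbounded_incl zeta x N : lc_topology zeta ->
  (forall A, vbounded tau A -> vbounded zeta A) -> nbhd zeta x N -> nbhd born x N.
Proof.
  intros Hz Hb HN. pose proof Hz as [_ [Hza _]].
  destruct (lc_absolutely_convex_nbhd zeta _ Hz (nbhd_translate_0 _ _ _ Hza HN))
    as [W [HW [HW0 HWN]]].
  apply born_nbhd. exists W. split; auto. split; auto. intros A HA. exact (Hb A HA W HW0).
Qed.

Lemma nbhd_born_of_tau x N : nbhd tau x N -> nbhd born x N.
Proof. apply nbhd_born_of_vbounded_incl; auto. Qed.

Lemma born_lc_topology : lc_topology born.
Proof.
  split; [apply born_is_topology|split; [apply born_add_continuous|split; [apply born_scal_continuous|split]]].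
  - intros x y Hxy. destruct Htau as [_ [_ [_ [Hh _]]]].
    destruct (Hh x y Hxy) as [U [V [HU [HV H]]]].
    exists U, V. repeat split; auto; apply nbhd_born_of_tau; auto.
  - intros N HN. apply born_nbhd in HN. destruct HN as [V [HV H]]. exists V. split; [|split].
    + apply born_nbhd. exists V; split; auto. intros v Hv; rewrite vadd_0_l; auto.
    + apply absolutely_convex_convex, HV.
    + intros v Hv. rewrite <- (vadd_0_l v); auto.
Qed.

Lemma born_vbounded A : vbounded born A <-> vbounded tau A.
Proof.
  split.
  - intros H U HU. apply H, nbhd_born_of_tau, HU.
  - intros H U HU. apply born_nbhd in HU. destruct HU as [V [HV HVU]].
    apply (absorbs_mono V U A A); [apply HV, H| |intros a Ha; auto].
    intros v Hv; rewrite <- (vadd_0_l v); auto.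
Qed.

Lemma born_finest zeta : lc_topology zeta -> (forall A, vbounded zeta A <-> vbounded tau A) ->
  forall U, zeta U -> born U.
Proof.
  intros Hz Hb U HU x Hx.
  assert (HN : nbhd zeta x U) by (exists U; repeat split; auto; intros y Hy; auto).
  apply nbhd_born_of_vbounded_incl in HN; auto; [|intros A HA; apply Hb; auto].
  apply born_nbhd in HN; auto.
Qed.

Lemma born_eq_of_bornological : bornological tau -> forall U, tau U <-> born U.
Proof.
  intros Hbo U. split; [apply born_finest; auto; intro; tauto|].
  intros HU. destruct Htau as [[_ [_ Hunion]] [Ha _]].
  replace U with (fun x => exists O, (tau O /\ subset O U) /\ O x).
  { apply Hunion. intros O [HO _]; auto. }
  apply functional_extensionality; intro x. apply propositional_extensionality. split.
  - intros [O [[_ HOU] Hx]]. auto.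
  - intro Hx. destruct (HU x Hx) as [V [[HV1 HV2] HV]].
    destruct (nbhd_translate_from_0 tau x V Ha (Hbo V HV1 HV2)) as [O [HO [HOx HOV]]].
    exists O. repeat split; auto. intros z Hz. rewrite <- (vadd_cancel_opp_r x z). apply HV, HOV, Hz.
Qed.

End BornTopology.

Section DiskHull.
Context {E : VectorSpace}.

Definition disk_hull (G : E -> Prop) : E -> Prop :=
  fun x => forall C, absolutely_convex C -> subset G C -> C x.

Lemma disk_hull_absolutely_convex G : absolutely_convex (disk_hull G).
Proof. intros x y a b Hx Hy H C HC HG. apply HC; [apply Hx|apply Hy|]; auto. Qed.

Lemma subset_disk_hull G : subset G (disk_hull G).
Proof. intros x Hx C HC HG. auto. Qed.

Lemma disk_hull_min G C : absolutely_convex C -> subset G C -> subset (disk_hull G) C.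
Proof. intros HC HG x Hx. apply Hx; auto. Qed.

End DiskHull.

Section GBase.
Context {E : VectorSpace} (tau : (E -> Prop) -> Prop) (Htau : lc_topology tau)
  (B : nat -> E -> Prop) (HB : fundamental_bounded_seq tau B).

Definition weight (al : nat -> nat) (n : nat) : R := / (INR (al n) + 1).

Lemma weight_pos al n : 0 < weight al n.
Proof. unfold weight. apply Rinv_0_lt_compat. pose proof (pos_INR (al n)); lra. Qed.

Lemma weight_antitone al be n : (al n <= be n)%nat -> weight be n <= weight al n.
Proof.
  intro H. unfold weight. apply Rinv_le_contravar; [pose proof (pos_INR (al n)); lra|].
  apply le_INR in H. lra.
Qed.

Definition weighted_layers (al : nat -> nat) (k : nat) : E -> Prop :=
  fun x => exists i b, (i < k)%nat /\ B i b /\ x = vscal (weight al i) b.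

Definition G_disk (k : nat) (al : nat -> nat) : E -> Prop :=
  disk_hull (weighted_layers al k).

Definition G_nbhd (al : nat -> nat) : E -> Prop := fun x => exists k, G_disk k al x.

Lemma G_disk_mono k k' al : (k <= k')%nat -> subset (G_disk k al) (G_disk k' al).
Proof.
  intros Hk. apply disk_hull_min; [apply disk_hull_absolutely_convex|].
  intros x [i [b [Hi [Hb ->]]]]. apply subset_disk_hull. exists i, b. split; auto. lia.
Qed.

Lemma G_disk_local k al be : (forall i, (i < k)%nat -> al i = be i) ->
  subset (G_disk k al) (G_disk k be).
Proof.
  intros H. apply disk_hull_min; [apply disk_hull_absolutely_convex|].
  intros x [i [b [Hi [Hb ->]]]]. apply subset_disk_hull. exists i, b.
  unfold weight. rewrite H; auto.
Qed.

Lemma G_nbhd_absolutely_convex al : absolutely_convex (G_nbhd al).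
Proof.
  intros x y a b [k1 Hx] [k2 Hy] H. exists (Nat.max k1 k2). apply disk_hull_absolutely_convex; auto.
  - apply (G_disk_mono k1); auto; lia.
  - apply (G_disk_mono k2); auto; lia.
Qed.

Lemma G_nbhd_bornivorous_disk al : bornivorous_disk tau (G_nbhd al).
Proof.
  split; [apply G_nbhd_absolutely_convex|]. intros A HA.
  destruct (proj2 HB A HA) as [n Hn].
  apply (absorbs_mono (G_nbhd al) (G_nbhd al) (B n) A); [|intros x; auto|auto].
  apply (absolutely_convex_absorbs _ _ (weight al n));
    [apply G_nbhd_absolutely_convex|apply weight_pos|].
  intros b Hb. exists (S n). apply subset_disk_hull. exists n, b. split; auto.
Qed.

Lemma G_nbhd_antitone al be : (forall i, (al i <= be i)%nat) -> subset (G_nbhd be) (G_nbhd al).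
Proof.
  intros H x [k Hx]. exists k. revert x Hx.
  apply disk_hull_min; [apply disk_hull_absolutely_convex|]. intros x [i [b [Hi [Hb ->]]]].
  pose proof (weight_pos al i). pose proof (weight_pos be i).
  replace (vscal (weight be i) b) with (vscal (weight be i / weight al i) (vscal (weight al i) b))
    by (rewrite vscal_assoc; f_equal; field; lra).
  apply absolutely_convex_balanced;
    [apply disk_hull_absolutely_convex|apply subset_disk_hull; exists i, b; auto|].
  rewrite Rabs_pos_eq by (apply Rlt_le, Rdiv_lt_0_compat; auto).
  apply (Rmult_le_reg_r (weight al i)); auto. unfold Rdiv.
  rewrite Rmult_assoc, Rinv_l, Rmult_1_r, Rmult_1_l by lra. apply weight_antitone, H.
Qed.

Lemma G_nbhd_sub_bornivorous_disk V : bornivorous_disk tau V -> exists al, subset (G_nbhd al) V.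
Proof.
  intros [HV HbV].
  assert (Hex : forall n, exists m : nat, forall b, B n b -> V (vscal (/ (INR m + 1)) b)).
  { intro n. destruct (HbV _ (proj1 HB n)) as [t [Ht H]].
    destruct (INR_unbounded t) as [m Hm]. pose proof (pos_INR m). exists m. intros b Hb.
    destruct (H (INR m + 1)) with b as [u [Hu ->]]; auto; [rewrite Rabs_pos_eq; lra|].
    rewrite vscal_assoc, Rinv_l, vscal_1 by lra; auto. }
  destruct (choice _ Hex) as [al Hal]. exists al.
  intros x [k Hx]. revert x Hx. apply disk_hull_min; auto.
  intros x [i [b [Hi [Hb ->]]]]. exact (Hal i b Hb).
Qed.

Lemma born_has_G_base : has_G_base (born tau).
Proof.
  exists G_nbhd. split; [|split].
  - intro al. apply born_nbhd; auto. exists (G_nbhd al).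
    split; [apply G_nbhd_bornivorous_disk|]. intros v Hv; rewrite vadd_0_l; auto.
  - intros N HN. apply born_nbhd in HN; auto. destruct HN as [V [HV H]].
    destruct (G_nbhd_sub_bornivorous_disk V HV) as [al Hal].
    exists al. intros v Hv. rewrite <- (vadd_0_l v). auto.
  - apply G_nbhd_antitone.
Qed.

End GBase.

Fixpoint list_code (l : list nat) : nat :=
  match l with nil => 0%nat | h :: t => S (Cantor.to_nat (h, list_code t)) end.

Lemma list_code_inj l1 l2 : list_code l1 = list_code l2 -> l1 = l2.
Proof.
  revert l2; induction l1 as [|h t IH]; intros [|h2 t2]; cbn [list_code]; try discriminate; auto.
  intro Hc. apply (f_equal (fun n => Cantor.of_nat (Nat.pred n))) in Hc. cbn [Nat.pred] in Hc.
  rewrite !Cantor.cancel_of_to in Hc. injection Hc as -> Hc. f_equal; auto.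
Qed.

Definition extends (be : nat -> nat) (l : list nat) : Prop :=
  forall i, (i < length l)%nat -> be i = nth i l 0%nat.

Definition update (be : nat -> nat) (k m : nat) : nat -> nat :=
  fun i => if Nat.eqb i k then m else be i.

Lemma extends_update be l m : extends be l -> extends (update be (length l) m) (l ++ m :: nil).
Proof.
  intros H i Hi. rewrite length_app in Hi; simpl in Hi. unfold update.
  destruct (Nat.eqb_spec i (length l)) as [->|Hne].
  - rewrite nth_middle; auto.
  - rewrite app_nth1 by lia. apply H; lia.
Qed.

Lemma update_ge be k m : (be k <= m)%nat -> forall i, (be i <= update be k m i)%nat.
Proof. intros H i. unfold update. destruct (Nat.eqb_spec i k); subst; lia. Qed.

Lemma extends_app_l be l l' : extends be (l ++ l') -> extends be l.
Proof. intros H i Hi. rewrite H by (rewrite length_app; lia). apply app_nth1; auto. Qed.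

Lemma extends_prefix be al k : extends be (map al (seq 0 k)) ->
  forall i, (i < k)%nat -> al i = be i.
Proof.
  intros H i Hi. rewrite H by (rewrite length_map, length_seq; auto).
  rewrite (nth_indep _ _ (al 0%nat)) by (rewrite length_map, length_seq; auto).
  rewrite map_nth, seq_nth; auto.
Qed.

Fixpoint iterate_snoc (g : list nat -> nat) (k : nat) : list nat :=
  match k with O => nil | S k => iterate_snoc g k ++ g (iterate_snoc g k) :: nil end.

Lemma prefix_choice (P : list nat -> Prop) : P nil ->
  (forall l, P l -> exists m, P (l ++ m :: nil)) ->
  exists al : nat -> nat, forall k, P (map al (seq 0 k)).
Proof.
  intros Hnil Hsnoc.
  assert (Hg : forall l, exists m, P l -> P (l ++ m :: nil)).
  { intro l. destruct (classic (P l)) as [Hl|Hl].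
    - destruct (Hsnoc l Hl) as [m Hm]; exists m; auto.
    - exists 0%nat; tauto. }
  destruct (choice _ Hg) as [g Hgs].
  exists (fun i => g (iterate_snoc g i)).
  assert (Hpref : forall k, iterate_snoc g k = map (fun i => g (iterate_snoc g i)) (seq 0 k)).
  { induction k as [|k IH]; auto. rewrite seq_S, map_app, <- IH; reflexivity. }
  intro k. rewrite <- Hpref. induction k as [|k IH]; simpl; auto.
Qed.

Lemma eventually_forall_in_list {X : Type} (P : nat -> X -> Prop) :
  (forall v, exists m, forall m', (m <= m')%nat -> P m' v) ->
  forall L, exists M, forall v, In v L -> forall m', (M <= m')%nat -> P m' v.
Proof.
  intros H L. induction L as [|a L IH]; [exists 0%nat; intros v []|].
  destruct IH as [M HM]. destruct (H a) as [m Hm]. exists (Nat.max M m).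
  intros v [<-|Hv] m' Hm'; [apply Hm|apply HM]; auto; lia.
Qed.

Section StrongPytkeev.
Context {E : VectorSpace} (tau : (E -> Prop) -> Prop) (Htau : lc_topology tau)
  (B : nat -> E -> Prop) (HB : fundamental_bounded_seq tau B).

Definition dominates (a0 : nat -> nat) (l : list nat) : Prop :=
  forall i, (i < length l)%nat -> (a0 i <= nth i l 0)%nat.

Definition cylinder_disk (l : list nat) : E -> Prop :=
  fun v => forall be, extends be l -> G_nbhd B be v.

Definition pytkeev_family (x : E) (n : nat) : E -> Prop :=
  fun y => exists l v, list_code l = n /\ cylinder_disk l v /\ y = vadd x v.

Lemma dominates_snoc a0 l m : dominates a0 l -> (a0 (length l) <= m)%nat ->
  dominates a0 (l ++ m :: nil).
Proof.
  intros Hl Hm i Hi. rewrite length_app in Hi; simpl in Hi.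
  destruct (Nat.eq_dec i (length l)) as [->|Hne]; [rewrite nth_middle; auto|].
  rewrite app_nth1 by lia. apply Hl; lia.
Qed.

Lemma cylinder_disk_nil v : cylinder_disk nil v -> v = vzero.
Proof.
  intro Hv. apply NNPP; intro Hv0. destruct Htau as [_ [_ [_ [Hh _]]]].
  destruct (Hh v vzero Hv0) as [U1 [V1 [HU1 [HV1 Hdisj]]]].
  apply (nbhd_born_of_tau tau Htau), born_nbhd in HV1; auto. destruct HV1 as [W [HW HWV1]].
  destruct (G_nbhd_sub_bornivorous_disk tau B HB W HW) as [al Hal].
  apply (Hdisj v). split; [exact (nbhd_mem _ _ _ HU1)|].
  rewrite <- (vadd_0_l v). apply HWV1, Hal, Hv. intros i Hi; simpl in Hi; lia.
Qed.

Lemma cylinder_disk_sub_dominated a0 l : dominates a0 l ->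
  subset (cylinder_disk l) (G_nbhd B a0).
Proof.
  intros Hl v Hv.
  apply (G_nbhd_antitone B a0 (fun i => if Nat.ltb i (length l) then nth i l 0%nat else a0 i)).
  - intro i. destruct (Nat.ltb_spec i (length l)); auto.
  - apply Hv. intros i Hi. rewrite (proj2 (Nat.ltb_lt _ _) Hi); reflexivity.
Qed.

Lemma cylinder_disk_snoc_sub be l m : extends be l -> (be (length l) <= m)%nat ->
  subset (cylinder_disk (l ++ m :: nil)) (G_nbhd B be).
Proof.
  intros Hbe Hm v Hv. apply (G_nbhd_antitone B be (update be (length l) m)).
  - apply update_ge; auto.
  - apply Hv, extends_update; auto.
Qed.

Lemma cylinder_disk_snoc_antitone l m m' : (m <= m')%nat ->
  subset (cylinder_disk (l ++ m' :: nil)) (cylinder_disk (l ++ m :: nil)).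
Proof.
  intros Hm v Hv be Hbe. apply (cylinder_disk_snoc_sub be l m'); auto.
  - exact (extends_app_l _ _ _ Hbe).
  - rewrite (Hbe (length l)), nth_middle by (rewrite length_app; simpl; lia). auto.
Qed.

Lemma G_disk_sub_cylinder_disk k al : subset (G_disk B k al) (cylinder_disk (map al (seq 0 k))).
Proof.
  intros v Hv be Hbe. exists k. apply (G_disk_local B k al be); auto.
  apply extends_prefix; auto.
Qed.

Section Avoidance.
Variables (x : E) (A : E -> Prop) (a0 : nat -> nat).
Hypothesis Hfin : forall l, dominates a0 l ->
  finite_set (fun y => pytkeev_family x (list_code l) y /\ A y).

Definition avoids (l : list nat) : Prop :=
  dominates a0 l /\ forall v, cylinder_disk l v -> ~ A (vadd x v).

Lemma avoids_eventually l : avoids l -> forall v, exists mv, forall m, (mv <= m)%nat ->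
  cylinder_disk (l ++ m :: nil) v -> ~ A (vadd x v).
Proof.
  intros [_ Hl] v. destruct (classic (exists be, extends be l /\ ~ G_nbhd B be v))
    as [[be [Hbe Hnv]]|Hall].
  - exists (be (length l)). intros m Hm Hv. contradict Hnv.
    apply (cylinder_disk_snoc_sub be l m); auto.
  - exists 0%nat. intros m _ _. apply Hl. intros be Hbe.
    apply NNPP; intro Hnv. apply Hall; eauto.
Qed.

Lemma avoids_snoc l : avoids l -> exists m, avoids (l ++ m :: nil).
Proof.
  intros Hl. set (k := length l).
  assert (Hdom : forall m, (a0 k <= m)%nat -> dominates a0 (l ++ m :: nil))
    by (intros m Hm; apply dominates_snoc; [apply Hl|auto]).
  destruct (Hfin _ (Hdom (a0 k) (le_n _))) as [L HL].
  destruct (eventually_forall_in_list _ (avoids_eventually l Hl) (map (vadd (vopp x)) L))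
    as [M HM].
  exists (Nat.max M (a0 k)). split; [apply Hdom; lia|]. intros v Hv HA.
  apply (HM v) with (m' := Nat.max M (a0 k)); auto; [|lia].
  rewrite <- (vadd_cancel_opp_l x v). apply in_map, HL. split; auto.
  exists (l ++ a0 k :: nil), v. repeat split; auto.
  apply (cylinder_disk_snoc_antitone l _ (Nat.max M (a0 k))); auto; lia.
Qed.

End Avoidance.

Lemma born_strong_Pytkeev : strong_Pytkeev (born tau).
Proof.
  intros x. exists (pytkeev_family x). intros U A HU Hcl HnA. apply NNPP; intro Hno.
  apply born_nbhd in HU; auto. destruct HU as [V [HV HVU]].
  destruct (G_nbhd_sub_bornivorous_disk tau B HB V HV) as [a0 Ha0].
  assert (Hfin : forall l, dominates a0 l ->
            finite_set (fun y => pytkeev_family x (list_code l) y /\ A y)).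
  { intros l Hl. apply NNPP; intro Hinf. apply Hno. exists (list_code l); split; auto.
    intros y [l' [v [Hc [Hv ->]]]]. apply list_code_inj in Hc; subst l'.
    apply HVU, Ha0, (cylinder_disk_sub_dominated a0 l); auto. }
  destruct (prefix_choice (avoids x A a0)) as [al Hal].
  - split; [intros i Hi; simpl in Hi; lia|].
    intros v Hv. rewrite (cylinder_disk_nil v Hv), vadd_0. exact HnA.
  - apply avoids_snoc; auto.
  - destruct (Hcl _ (born_nbhd_translate tau Htau x _ (G_nbhd_bornivorous_disk tau B HB al)))
      as [y [[v [[k Hv] ->]] HA]].
    exact (proj2 (Hal k) v (G_disk_sub_cylinder_disk k al v Hv) HA).
Qed.

End StrongPytkeev.

Theorem mainTheorem16 (E : VectorSpace) (tau : (E -> Prop) -> Prop)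
  (Htau : lc_topology tau) (B : nat -> E -> Prop)
  (HB : fundamental_bounded_seq tau B) :
  exists xi : (E -> Prop) -> Prop,
    lc_topology xi /\
    (forall A : E -> Prop, vbounded xi A <-> vbounded tau A) /\
    (forall zeta : (E -> Prop) -> Prop, lc_topology zeta ->
       (forall A : E -> Prop, vbounded zeta A <-> vbounded tau A) ->
       forall U, zeta U -> xi U) /\
    has_G_base xi /\
    strong_Pytkeev xi /\
    (bornological tau -> forall U, tau U <-> xi U).
Proof.
  exists (born tau).
  split; [exact (born_lc_topology tau Htau)|].
  split; [exact (born_vbounded tau Htau)|].
  split; [exact (born_finest tau Htau)|].
  split; [exact (born_has_G_base tau Htau B HB)|].
  split; [exact (born_strong_Pytkeev tau Htau B HB)|].
  exact (born_eq_of_bornological tau Htau).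
Qed.
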